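(* Let $\Omega=[-1,1]$, $\mathbb{X}=C([-1,1])$ with the supremum norm, $J=[t_0,t_0+T]$, and assume the standing setup below. For $n\in\mathbb{N}$ let $h_x=2/n$, $x_i=-1+ih_x$ ($i=0,\dots,n$), let $\ell_i$ be the continuous piecewise-linear ''hat'' functions with $\ell_i(x_j)=\delta_{ij}$ and breakpoints $\{x_j\}$ (supported on $[x_{i-1},x_{i+1}]\cap[-1,1]$), $\mathbb{X}_n=\mathrm{span}\{\ell_0,\dots,\ell_n\}$, and $P_nv=\sum_{j=0}^n v(x_j)\ell_j$. For $u_0\in\mathbb{X}$, let $u$ solve $u'=N(t,u)$, $u(t_0)=u_0$ and $u_n$ solve $u_n'=P_nN(t,u_n)$, $u_n(t_0)=P_nu_0$. Then $\|u-u_n\|_{C(J,\mathbb{X})}\to0$ as $n\to\infty$. If moreover $u\in C(J,C^2([-1,1]))$, there exists a constant $\kappa_u>0$, depending on $u$ but not on $n$, such that $\|u-u_n\|_{C(J,\mathbb{X})}\le\kappa_uh_x^2$, so the error is $O(n^{-2})$.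
   Context: Standing setup: the kernel $w$ on $[-1,1]^2$ satisfies $\lim_{h\to0}\sup_{|x-z|\le h}\int_{-1}^1|w(x,y)-w(z,y)|dy=0$ and $\sup_{x}\int_{-1}^1|w(x,y)|dy<\infty$; $f:\mathbb{R}\to\mathbb{R}$ is bounded, everywhere differentiable and Lipschitz with $f,f'$ bounded; $\xi\in C(J,\mathbb{X})$. $F(u)(x)=f(u(x))$, $(Wu)(x)=\int_{-1}^1w(x,y)u(y)dy$, $N(t,u)=-u+WF(u)+\xi(t)$. Solutions are $C^1(J,\mathbb{X})$ functions satisfying the equation on $J$. $\|v\|_{C(J,\mathbb{X})}=\max_{t\in J}\|v(t)\|_\infty$. *)

From HB Require Import structures.
From mathcomp Require Import all_boot all_order all_algebra.
From mathcomp Require Import all_classical all_reals all_analysis.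
Set Implicit Arguments. Unset Strict Implicit. Unset Printing Implicit Defensive.
Import Order.TTheory GRing.Theory Num.Theory.
Import numFieldNormedType.Exports.
Local Open Scope classical_set_scope.
Local Open Scope ring_scope.

Section Defs.
Variable R : realType.

Definition Omega : set R := `[(-1)%R, 1%R]%classic.

Definition Wop (w : R -> R -> R) (v : R -> R) : R -> R :=
  fun x => (\int[lebesgue_measure]_(y in Omega) (w x y * v y))%R.

Definition Nop (w : R -> R -> R) (f : R -> R) (xi : R -> R -> R)
  (t : R) (v : R -> R) : R -> R :=
  fun x => - v x + Wop w (fun y => f (v y)) x + xi t x.

Definition hx (n : nat) : R := 2 / n%:R.
Definition node (n i : nat) : R := -1 + i%:R * hx n.

(* continuous piecewise-linear hat function l_i with l_i(x_j) = delta_ij,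
   breakpoints {x_j}, support [x_{i-1}, x_{i+1}] *)
Definition hat (n i : nat) (x : R) : R :=
  Num.max 0 (1 - `|x - node n i| / hx n).

Definition Pn (n : nat) (v : R -> R) : R -> R :=
  fun x => \sum_(j < n.+1) v (node n j) * hat n j x.

Definition inX (v : R -> R) : Prop := {within `[(-1)%R, 1%R], continuous v}.

(* v : J -> X belongs to C(J, X), J = [t0, t0+T], X with sup norm *)
Definition inCJX (t0 T : R) (v : R -> R -> R) : Prop :=
  (forall t, t \in `[t0, t0 + T] -> inX (v t)) /\
  (forall t, t \in `[t0, t0 + T] -> forall eps, 0 < eps ->
     exists2 delta, 0 < delta & forall s, s \in `[t0, t0 + T] ->
       `|s - t| < delta -> forall x, x \in `[(-1)%R, 1%R] ->
         `|v s x - v t x| <= eps).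

Definition hasDerivCJX (t0 T : R) (v v' : R -> R -> R) : Prop :=
  forall t, t \in `[t0, t0 + T] -> forall eps, 0 < eps ->
    exists2 delta, 0 < delta & forall s, s \in `[t0, t0 + T] ->
      0 < `|s - t| < delta -> forall x, x \in `[(-1)%R, 1%R] ->
        `|(v s x - v t x) / (s - t) - v' t x| <= eps.

Definition isSolution (t0 T : R) (G : R -> (R -> R) -> (R -> R))
  (v0 : R -> R) (v : R -> R -> R) : Prop :=
  exists v' : R -> R -> R,
    [/\ inCJX t0 T v, inCJX t0 T v', hasDerivCJX t0 T v v',
        (forall t, t \in `[t0, t0 + T] -> forall x, x \in `[(-1)%R, 1%R] ->
           v' t x = G t (v t) x) &
        (forall x, x \in `[(-1)%R, 1%R] -> v t0 x = v0 x)].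

Definition hasDerivOmega (g g' : R -> R) : Prop :=
  forall x, x \in `[(-1)%R, 1%R] -> forall eps, 0 < eps ->
    exists2 delta, 0 < delta & forall y, y \in `[(-1)%R, 1%R] ->
      0 < `|y - x| < delta -> `|(g y - g x) / (y - x) - g' x| <= eps.

(* v in C(J, C^2([-1,1])) (C^2 with norm sum_{k<=2} sup |v^(k)|) *)
Definition inCJC2 (t0 T : R) (v : R -> R -> R) : Prop :=
  exists v1 v2 : R -> R -> R,
    [/\ inCJX t0 T v, inCJX t0 T v1, inCJX t0 T v2,
        (forall t, t \in `[t0, t0 + T] -> hasDerivOmega (v t) (v1 t)) &
        (forall t, t \in `[t0, t0 + T] -> hasDerivOmega (v1 t) (v2 t))].

End Defs.

(* The error splits as [u - u_n = (u - P_n u) + th] with [th = P_n u - u_n].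
   The hat functions form a partition of unity reproducing affine functions, so
   [u - P_n u] is bounded by the oscillation of [u] over one mesh cell, hence
   small by uniform continuity, and by [sup |u_xx| h_x^2] by Taylor's formula.
   [th] vanishes at [t0] and [th' = P_n (N u - N u_n)]; [P_n] does not increase
   the sup norm and [N] is Lipschitz on [C([-1, 1])], so
   [|th'| <= K (|u - P_n u| + |th|)] and Gronwall's inequality bounds [th] by
   [e^(2KT) sup |u - P_n u|].  Compactness of intervals enters through real
   induction. *)

From HB Require Import structures.
From mathcomp Require Import all_boot all_order all_algebra.
From mathcomp Require Import all_classical all_reals all_analysis.
From mathcomp Require Import ring lra.
Import Order.TTheory GRing.Theory Num.Theory.
Import numFieldNormedType.Exports.
Local Open Scope classical_set_scope.
Local Open Scope ring_scope.

Local Notation I := (`[(-1)%R, 1%R]).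

Section RealInduction.
Variable R : realType.

Lemma itv_real_ind (a b : R) (P : R -> Prop) :
  a <= b -> P a ->
  (forall t, a < t -> t <= b -> (forall s, a <= s -> s < t -> P s) -> P t) ->
  (forall t, a <= t -> t < b -> P t ->
     exists2 d, 0 < d & forall s, t < s -> s < t + d -> s <= b -> P s) ->
  forall t, a <= t -> t <= b -> P t.
Proof.
move=> ab Pa left_step right_step.
pose S := [set t | a <= t <= b /\ forall s, a <= s -> s <= t -> P s].
have Sa : S a.
  split; first by rewrite lexx ab.
  by move=> s aS sa; have -> : s = a by apply/eqP; rewrite eq_le sa aS.
have supS : has_sup S by split; [exists a | exists b => y [/andP[_ ?] _]].
pose c := sup S.
have ac : a <= c by apply: (ub_le_sup supS.2).
have cb : c <= b by apply: ge_sup; [exact: supS.1 | move=> y [/andP[_ ?] _]].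
have below_c : forall s, a <= s -> s < c -> P s.
  move=> s aS sc.
  have [e [_ Pe] ce] := @sup_adherent _ S (c - s) (ltac:(by rewrite subr_gt0)) supS.
  apply: Pe => //; rewrite -/c in ce; lra.
have Pc : P c.
  have [<-//|ac'] := eqVneq a c.
  by apply: left_step => //; rewrite lt_neqAle ac' ac.
have cbE : c = b.
  apply/eqP; rewrite eq_le cb /= leNgt; apply/negP => cb'.
  have [d d0 Pd] := right_step c ac cb' Pc.
  pose s := Num.min (c + d / 2) b.
  have Ss : S s.
    split; first by rewrite /s ge_min lexx orbT andbT le_min ab; lra.
    move=> s' aS' ss'; have [s'c|] := ltP s' c; first exact: below_c.
    rewrite le_eqVlt => /orP[/eqP <-//|cs'].
    by move: ss'; rewrite /s le_min => /andP[? ?]; apply: Pd => //; lra.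
  have : s <= c by apply: (ub_le_sup supS.2).
  rewrite /s ge_min => /orP[|]; lra.
move=> t aT tb; have [tc|ct] := ltP t c; first exact: below_c.
by have -> : t = c by apply/eqP; rewrite eq_le ct cbE tb.
Qed.

(* Compactness of [a, b], in the form "local bounds glue to a global one". *)
Lemma itv_local_bound (a b : R) (Q : R -> R -> Prop) :
  a <= b ->
  (forall s B B', B <= B' -> Q s B -> Q s B') ->
  (forall t, a <= t -> t <= b -> exists2 d, 0 < d &
      exists B, forall s, a <= s -> s <= b -> `|s - t| < d -> Q s B) ->
  exists B, forall s, a <= s -> s <= b -> Q s B.
Proof.
move=> ab Qmono Qloc.
pose P t := exists B, forall s, a <= s -> s <= t -> Q s B.
suff [B QB] : P b by exists B.
apply: (@itv_real_ind a b P ab) => //; rewrite /P.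
- have [d d0 [B QB]] := Qloc a (lexx a) ab.
  exists B => s aS sa; have sE : s = a by apply/eqP; rewrite eq_le sa aS.
  by apply: QB; rewrite ?sE ?subrr ?normr0.
- move=> t at0 tb IH.
  have [d d0 [B1 QB1]] := Qloc t (ltW at0) tb.
  pose s0 := Num.max a (t - d / 2).
  have [B2 QB2] : P s0.
    by apply: IH; [rewrite le_max lexx | rewrite /s0 gt_max at0 /=; lra].
  exists (Num.max B1 B2) => s aS st; have [ss0|s0s] := leP s s0.
    by apply: (Qmono _ B2); [rewrite le_max lexx orbT | exact: QB2].
  apply: (Qmono _ B1); first by rewrite le_max lexx.
  apply: QB1 => //; first exact: le_trans tb.
  by move: s0s; rewrite /s0 gt_max => /andP[_ ?]; rewrite ler0_norm; lra.
- move=> t at0 tb [B2 QB2].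
  have [d d0 [B1 QB1]] := Qloc t at0 (ltW tb).
  exists d => // s ts std sb; exists (Num.max B1 B2) => s' aS' s's.
  have [s't|ts'] := leP s' t.
    by apply: (Qmono _ B2); [rewrite le_max lexx orbT | exact: QB2].
  apply: (Qmono _ B1); first by rewrite le_max lexx.
  by apply: QB1 => //; [exact: le_trans sb | rewrite gtr0_norm; lra].
Qed.

End RealInduction.

Section UniformContinuity.
Context {R : realType}.

(* The second conjunct of [inCJX t0 T v]. *)
Definition cont_CJX (t0 T : R) (v : R -> R -> R) : Prop :=
  forall t, t \in `[t0, t0 + T] -> forall eps, 0 < eps ->
    exists2 delta, 0 < delta & forall s, s \in `[t0, t0 + T] ->
      `|s - t| < delta -> forall x, x \in I -> `|v s x - v t x| <= eps.

Lemma inX_continuous_at {v : R -> R} {x : R} : inX v -> x \in I -> forall e, 0 < e ->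
  exists2 d, 0 < d & forall y, y \in I -> `|y - x| < d -> `|v y - v x| <= e.
Proof.
move=> cv xI e e0.
have := (@subspace_continuousP _ [set x : R | x \in I] _ v).1 cv x xI.
move/cvgrPdist_le/(_ e e0); rewrite near_withinE.
case/nbhs_ballP => d d0 Hd; exists d => // y yI yx.
by rewrite distrC; apply: Hd => //; rewrite /ball /= distrC.
Qed.

Lemma inX_unif_cont {g : R -> R} : inX g -> forall e, 0 < e ->
  exists2 d, 0 < d & forall x y, x \in I -> y \in I -> `|x - y| < d ->
    `|g x - g y| <= e.
Proof.
move=> cg e e0.
pose Q (s B : R) := 0 < B /\
  forall y, y \in I -> `|y - s| < B^-1 -> `|g y - g s| <= e / 2.
have [B QB] : exists B, forall s, -1 <= s -> s <= 1 -> Q s B.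
  apply: itv_local_bound; first lra.
    move=> s B B' BB' [B0 QB]; split; first exact: lt_le_trans BB'.
    move=> y yI ys; apply: QB => //; apply: lt_le_trans ys _.
    by rewrite lef_pV2 ?posrE //; exact: lt_le_trans BB'.
  move=> t t1 t2; have tI : t \in I by rewrite in_itv /= t1 t2.
  have [d d0 Hd] := inX_continuous_at cg tI (e / 4) ltac:(lra).
  exists (d / 2); first lra.
  exists (2 / d) => s s1 s2 st; split; first by rewrite divr_gt0.
  move=> y yI; rewrite invf_div => ys.
  have yt : `|y - t| < d.
    by have := ler_normD (y - s) (s - t); rewrite addrA subrK; lra.
  have := Hd y yI yt; have := Hd s (ltac:(by rewrite in_itv /= s1 s2)) (ltac:(lra)).
  have := ler_normD (g y - g t) (g t - g s).
  by rewrite addrA subrK [`|g s - _|]distrC; lra.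
have B0 : 0 < B by have [] := QB 0 ltac:(lra) ltac:(lra).
exists B^-1; first by rewrite invr_gt0.
move=> x y xI /[dup] yI; rewrite in_itv /= => /andP[y1 y2] xy.
by have := (QB y y1 y2).2 x xI xy; lra.
Qed.

Lemma inX_bounded {g : R -> R} : inX g -> exists B, forall x, x \in I -> `|g x| <= B.
Proof.
move=> cg.
have [B gB] : exists B, forall s, -1 <= s -> s <= 1 -> `|g s| <= B.
  apply: (@itv_local_bound _ (-1) 1 (fun s B => `|g s| <= B)); first lra.
    by move=> s B B' BB' h; exact: le_trans BB'.
  move=> t t1 t2; have tI : t \in I by rewrite in_itv /= t1 t2.
  have [d d0 Hd] := inX_continuous_at cg tI 1 ltr01.
  exists d => //; exists (`|g t| + 1) => s s1 s2 st.
  have := Hd s (ltac:(by rewrite in_itv /= s1 s2)) st.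
  by have := ler_normD (g s - g t) (g t); rewrite subrK; lra.
by exists B => x; rewrite in_itv /= => /andP[? ?]; exact: gB.
Qed.

Section TimeInterval.
Context {t0 T : R}.
Hypothesis T_gt0 : 0 < T.
Local Notation J := (`[t0, t0 + T]).

Lemma inCJX_unif_cont {v : R -> R -> R} : inCJX t0 T v -> forall e, 0 < e ->
  exists2 d, 0 < d & forall t x y, t \in J -> x \in I -> y \in I ->
    `|x - y| < d -> `|v t x - v t y| <= e.
Proof.
move=> [cx ct] e e0.
pose Q (s B : R) := 0 < B /\ forall x y, x \in I -> y \in I ->
   `|x - y| < B^-1 -> `|v s x - v s y| <= e.
have [B QB] : exists B, forall s, t0 <= s -> s <= t0 + T -> Q s B.
  apply: itv_local_bound; first by have := T_gt0; lra.
    move=> s B B' BB' [B0 QB]; split; first exact: lt_le_trans BB'.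
    move=> x y xI yI ys; apply: QB => //; apply: lt_le_trans ys _.
    by rewrite lef_pV2 ?posrE //; exact: lt_le_trans BB'.
  move=> t t1 t2; have tJ : t \in J by rewrite in_itv /= t1 t2.
  have [d1 d10 Hd1] := inX_unif_cont (cx t tJ) (e / 3) ltac:(lra).
  have [d2 d20 Hd2] := ct t tJ (e / 3) ltac:(lra).
  exists d2 => //; exists d1^-1 => s s1 s2 st; split; first by rewrite invr_gt0.
  have sJ : s \in J by rewrite in_itv /= s1 s2.
  move=> x y xI yI; rewrite invrK => xy.
  have := Hd2 s sJ st x xI; have := Hd2 s sJ st y yI; have := Hd1 x y xI yI xy.
  have := ler_normD (v s x - v t x) (v t x - v t y).
  have := ler_normD (v s x - v t x + (v t x - v t y)) (v t y - v s y).
  rewrite [`|v s y - _|]distrC.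
  have -> : v s x - v t x + (v t x - v t y) + (v t y - v s y) = v s x - v s y by ring.
  lra.
have B0 : 0 < B by have [] := QB t0 (lexx _) ltac:(have := T_gt0; lra).
exists B^-1; first by rewrite invr_gt0.
by move=> t x y; rewrite in_itv /= => /andP[? ?] xI yI xy; exact: (QB t _ _).2.
Qed.

Lemma inCJX_bounded {v : R -> R -> R} : inCJX t0 T v ->
  exists B, forall t x, t \in J -> x \in I -> `|v t x| <= B.
Proof.
move=> [cx ct].
have [B vB] : exists B, forall s, t0 <= s -> s <= t0 + T ->
    forall x, x \in I -> `|v s x| <= B.
  apply: (@itv_local_bound _ t0 (t0 + T)
            (fun s B => forall x, x \in I -> `|v s x| <= B)).
    by have := T_gt0; lra.
    by move=> s B B' BB' h x xI; apply: le_trans BB'; exact: h.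
  move=> t t1 t2; have tJ : t \in J by rewrite in_itv /= t1 t2.
  have [B0 HB0] := inX_bounded (cx t tJ).
  have [d d0 Hd] := ct t tJ 1 ltr01.
  exists d => //; exists (B0 + 1) => s s1 s2 st x xI.
  have := Hd s (ltac:(by rewrite in_itv /= s1 s2)) st x xI; have := HB0 x xI.
  by have := ler_normD (v s x - v t x) (v t x); rewrite subrK; lra.
by exists B => t x; rewrite in_itv /= => /andP[? ?]; exact: vB.
Qed.

End TimeInterval.
End UniformContinuity.

Section MeanValue.
Context {R : realType}.

Definition has_deriv_on (a b : R) (g g' : R -> R) : Prop :=
  forall z, a <= z -> z <= b -> forall e, 0 < e -> exists2 d, 0 < d &
    forall y, a <= y -> y <= b -> 0 < `|y - z| < d ->
      `|(g y - g z) / (y - z) - g' z| <= e.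

Lemma diff_quot_bound {x y gx gy c e : R} : x != y ->
  `|(gy - gx) / (y - x) - c| <= e -> `|gy - gx| <= (`|c| + e) * `|y - x|.
Proof.
move=> xy h.
have -> : gy - gx = (gy - gx) / (y - x) * (y - x) by rewrite divfK // subr_eq0 eq_sym.
rewrite normrM ler_wpM2r //.
have := ler_normD ((gy - gx) / (y - x) - c) c; rewrite subrK.
by have := normr_ge0 c; lra.
Qed.

Lemma le_left_limit (a t : R) (F Pb : R -> R) : a < t ->
  (forall e, 0 < e -> exists2 d, 0 < d & forall s, a <= s -> s < t -> t - s < d ->
       `|F t - F s| <= e) ->
  (forall s, a <= s -> s < t -> `|F s| <= Pb s) ->
  (forall s, s <= t -> Pb s <= Pb t) -> `|F t| <= Pb t.
Proof.
move=> at0 Fcont below Pb_mono.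
apply/ler_addgt0Pr => e e0.
have [d d0 Hd] := Fcont e e0.
pose s := Num.max a (t - d / 2).
have as_ : a <= s by rewrite le_max lexx.
have st : s < t by rewrite gt_max at0 /=; lra.
have s_ge : t - d / 2 <= s by rewrite le_max lexx orbT.
have := Hd s as_ st ltac:(lra).
have := below s as_ st; have := Pb_mono s (ltW st).
by have := ler_normD (F t - F s) (F s); rewrite subrK; lra.
Qed.

Lemma has_deriv_on_cont {a b : R} {g g' : R -> R} {z : R} :
  has_deriv_on a b g g' -> a <= z -> z <= b ->
  forall e, 0 < e -> exists2 d, 0 < d & forall y, a <= y -> y <= b -> `|y - z| < d ->
      `|g y - g z| <= e.
Proof.
move=> dg az zb e e0.
have [d d0 Hd] := dg z az zb 1 ltr01.
have C0 : 0 < `|g' z| + 1 by have := normr_ge0 (g' z); lra.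
exists (Num.min d (e / (`|g' z| + 1))); first by rewrite lt_min d0 divr_gt0.
move=> y ay yb; rewrite lt_min => /andP[yd ye].
have [->|yz] := eqVneq y z; first by rewrite subrr normr0 ltW.
have zy : z != y by rewrite eq_sym.
have := diff_quot_bound zy (Hd y ay yb ltac:(by rewrite normr_gt0 subr_eq0 yz yd)).
move/le_trans; apply; by rewrite mulrC -ler_pdivlMr // ltW.
Qed.

Lemma mean_value_ineq (g g' : R -> R) (a b B : R) : a <= b ->
  has_deriv_on a b g g' -> (forall z, a <= z -> z <= b -> `|g' z| <= B) ->
  `|g b - g a| <= B * (b - a).
Proof.
move=> ab dg g'B.
have B0 : 0 <= B by apply: le_trans (g'B a (lexx a) ab).
apply/ler_addgt0Pr => e e0.
pose eps := e / (b - a + 1).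
have eps0 : 0 < eps by rewrite divr_gt0 //; lra.
have epsb : eps * (b - a) <= e.
  rewrite /eps mulrAC ler_pdivrMr; last lra.
  by rewrite ler_wpM2l //; [exact: ltW | lra].
suff : `|g b - g a| <= (B + eps) * (b - a) by rewrite mulrDl; lra.
apply: (@itv_real_ind R a b (fun t => `|g t - g a| <= (B + eps) * (t - a))) => //.
- by rewrite !subrr normr0 mulr0.
- move=> t at0 tb IH.
  apply: (@le_left_limit a t (fun s => g s - g a) (fun s => (B + eps) * (s - a))) => //.
  + move=> e' e0'; have [d d0 Hd] := has_deriv_on_cont dg (ltW at0) tb e' e0'.
    exists d => // s aS st ts.
    have -> : g t - g a - (g s - g a) = - (g s - g t) by ring.
    rewrite normrN; apply: Hd => //; first exact: le_trans (ltW st) tb.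
    by rewrite ltr0_norm ?subr_lt0 //; lra.
  + by move=> s st; rewrite ler_wpM2l //; lra.
- move=> t at0 tb IH.
  have [d d0 Hd] := dg t at0 (ltW tb) eps eps0.
  exists d => // s ts std sb; have ts' : t != s by rewrite lt_eqF.
  have := diff_quot_bound ts' (Hd s ltac:(lra) sb ltac:(rewrite gtr0_norm; lra)).
  rewrite [`|s - t|]gtr0_norm; last lra.
  have := g'B t at0 (ltW tb) => g'tB h.
  have : (`|g' t| + eps) * (s - t) <= (B + eps) * (s - t) by rewrite ler_wpM2r; lra.
  have := ler_normD (g s - g t) (g t - g a).
  have -> : g s - g t + (g t - g a) = g s - g a by ring.
  have -> : (B + eps) * (s - a) = (B + eps) * (t - a) + (B + eps) * (s - t) by ring.
  lra.
Qed.

Lemma hasDerivOmega_on {g g' : R -> R} {a b : R} :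
  hasDerivOmega g g' -> -1 <= a -> b <= 1 -> has_deriv_on a b g g'.
Proof.
move=> dg a1 b1 z az zb e e0.
have [d d0 Hd] := dg z (ltac:(rewrite in_itv /=; apply/andP; split; lra)) e e0.
by exists d => // y ay yb yz; apply: Hd => //; rewrite in_itv /=; apply/andP; split; lra.
Qed.

Lemma hasDerivOmega_sub_affine {v v1 : R -> R} (x c : R) : hasDerivOmega v v1 ->
  hasDerivOmega (fun z => v z - v x - c * (z - x)) (fun z => v1 z - c).
Proof.
move=> dv z zI e e0; have [d d0 Hd] := dv z zI e e0.
exists d => // y yI yz.
have yz0 : y - z != 0 by rewrite -normr_gt0; case/andP: yz.
have -> : (v y - v x - c * (y - x) - (v z - v x - c * (z - x))) / (y - z) - (v1 z - c)
   = (v y - v z) / (y - z) - v1 z.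
  have -> : v y - v x - c * (y - x) - (v z - v x - c * (z - x)) = (v y - v z) - c * (y - z)
    by ring.
  by rewrite mulrBl -mulrA divff // mulr1; ring.
exact: Hd.
Qed.

(* Two nested mean-value inequalities: first for [v1] on [x, z], then for the
   Taylor remainder [z |-> v z - v x - v1 x * (z - x)] on [x, y]. *)
Lemma taylor2_bound {v v1 v2 : R -> R} {B : R} :
  hasDerivOmega v v1 -> hasDerivOmega v1 v2 -> (forall x, x \in I -> `|v2 x| <= B) ->
  forall x y, x \in I -> y \in I ->
    `|v y - v x - v1 x * (y - x)| <= B * (y - x) ^+ 2.
Proof.
move=> dv dv1 v2B x y /[dup] xI; rewrite !in_itv /= => /andP[x1 x2] /andP[y1 y2].
have B0 : 0 <= B by apply: le_trans (v2B x xI).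
have v2B' : forall z, -1 <= z -> z <= 1 -> `|v2 z| <= B.
  by move=> z z1 z2; apply: v2B; rewrite in_itv /= z1 z2.
have drem := hasDerivOmega_sub_affine x (v1 x) dv.
have rem_x : v x - v x - v1 x * (x - x) = 0 by ring.
have [xy|yx] := leP x y.
- have := @mean_value_ineq _ _ x y (B * (y - x)) xy (hasDerivOmega_on drem x1 y2) _.
  rewrite rem_x subr0 -mulrA -expr2; apply=> z xz zy.
  have z1 : z <= 1 by lra.
  have := @mean_value_ineq v1 v2 x z B xz (hasDerivOmega_on dv1 x1 z1).
  have v2B_xz : forall z', x <= z' -> z' <= z -> `|v2 z'| <= B.
    by move=> z' ? ?; apply: v2B'; lra.
  by move=> /(_ v2B_xz) /le_trans; apply; rewrite ler_wpM2l //; lra.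
- have := @mean_value_ineq _ _ y x (B * (x - y)) (ltW yx) (hasDerivOmega_on drem y1 x2) _.
  rewrite rem_x sub0r normrN.
  have -> : (y - x) ^+ 2 = (x - y) * (x - y) by ring.
  rewrite mulrA; apply=> z yz zx.
  have z1 : -1 <= z by lra.
  have := @mean_value_ineq v1 v2 z x B zx (hasDerivOmega_on dv1 z1 x2).
  have v2B_zx : forall z', z <= z' -> z' <= x -> `|v2 z'| <= B.
    by move=> z' ? ?; apply: v2B'; lra.
  by move=> /(_ v2B_zx); rewrite distrC => /le_trans; apply; rewrite ler_wpM2l //; lra.
Qed.

End MeanValue.

Section Interpolation.
Context {R : realType}.
Variable n : nat.
Hypothesis n_gt0 : (0 < n)%N.
Local Notation h := (hx R n).
Local Notation x_ := (node R n).

Lemma hx_gt0 : 0 < h.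
Proof. by rewrite /hx divr_gt0 // ltr0n. Qed.

Lemma nodeS (j : nat) : x_ j.+1 = x_ j + h.
Proof. by rewrite /node -addn1 natrD; ring. Qed.

Lemma node0 : x_ 0 = -1.
Proof. by rewrite /node mul0r addr0. Qed.

Lemma node_last : x_ n = 1.
Proof. by rewrite /node /hx mulrC divfK ?pnatr_eq0 -?lt0n //; lra. Qed.

Lemma node_le {i j : nat} : (i <= j)%N -> x_ i <= x_ j.
Proof.
by move=> ij; rewrite /node lerD2l ler_wpM2r ?ler_nat // ltW // hx_gt0.
Qed.

Lemma node_in_I {j : nat} : (j <= n)%N -> x_ j \in I.
Proof.
by move=> jn; rewrite in_itv /= -node0 -node_last !node_le.
Qed.

Lemma hat_ge0 (j : nat) (x : R) : 0 <= hat n j x.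
Proof. by rewrite /hat le_max lexx. Qed.

Lemma hat_eq0 (j : nat) (x : R) : h <= `|x - x_ j| -> hat n j x = 0.
Proof.
move=> hxj; rewrite /hat; apply/max_idPl.
by rewrite subr_le0 ler_pdivlMr ?mul1r // hx_gt0.
Qed.

Lemma hatE (j : nat) (x : R) : `|x - x_ j| <= h -> hat n j x = 1 - `|x - x_ j| / h.
Proof.
move=> hxj; rewrite /hat; apply/max_idPr.
by rewrite subr_ge0 ler_pdivrMr ?mul1r // hx_gt0.
Qed.

Lemma node_cell {x : R} : x \in I -> exists2 k, (k < n)%N & x_ k <= x <= x_ k.+1.
Proof.
rewrite in_itv /= => /andP[x1 x2].
suff : forall m, (0 < m)%N -> x <= x_ m -> exists2 k, (k < m)%N & x_ k <= x <= x_ k.+1.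
  by apply; rewrite ?node_last.
elim=> [//|[|m] IH] _ xm; first by exists 0%N; rewrite ?node0 ?x1.
have [xm'|mx] := leP x (x_ m.+1); last by exists m.+1; rewrite ?(ltW mx).
by have [k km kx] := IH isT xm'; exists k => //; apply: ltn_trans km _.
Qed.

Lemma hat_eq0_off_cell {x : R} {k : nat} : x_ k <= x <= x_ k.+1 ->
  forall j, j != k -> j != k.+1 -> hat n j x = 0.
Proof.
move=> /andP[xk1 xk2] j jk jk1; apply: hat_eq0.
have := hx_gt0; have [jk'|kj] := ltnP j k.
  have := node_le jk'; rewrite nodeS => *; rewrite ger0_norm; lra.
have k2j : (k.+2 <= j)%N by rewrite ltn_neqAle eq_sym jk1 ltn_neqAle eq_sym jk kj.
by have := node_le k2j; rewrite nodeS => *; rewrite ler0_norm; lra.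
Qed.

Lemma sum_hat_cell (F : nat -> R) {x : R} {k : nat} : (k < n)%N -> x_ k <= x <= x_ k.+1 ->
  \sum_(j < n.+1) F j * hat n j x = F k * hat n k x + F k.+1 * hat n k.+1 x.
Proof.
move=> kn xk; have kn1 : (k < n.+1)%N by apply: ltn_trans kn _.
rewrite (bigD1 (inord k)) //= (bigD1 (inord k.+1)) //=; last first.
  by rewrite -val_eqE /= !inordK // gtn_eqF.
rewrite big1 ?addr0 ?inordK // => j /andP[jk jk1].
rewrite (hat_eq0_off_cell xk) ?mulr0 //.
- by move: jk; rewrite -val_eqE /= inordK.
- by move: jk1; rewrite -val_eqE /= inordK.
Qed.

Lemma hat_partition {x : R} : x \in I ->
  \sum_(j < n.+1) hat n j x = 1 /\ \sum_(j < n.+1) x_ j * hat n j x = x.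
Proof.
move=> xI; have [k kn /[dup] xk /andP[xk1 xk2]] := node_cell xI.
have hp := hx_gt0; have hn0 : h != 0 by rewrite gt_eqF.
have hatk : hat n k x = 1 - (x - x_ k) / h.
  by rewrite hatE ger0_norm; move: xk2; rewrite ?nodeS; lra.
have dist_k1 : `|x - x_ k.+1| = x_ k + h - x.
  by rewrite ler0_norm ?subr_le0 // opprB nodeS.
have hatk1 : hat n k.+1 x = (x - x_ k) / h.
  by rewrite hatE dist_k1; [field | lra].
split.
  under eq_bigr => j _ do rewrite -[hat n j x]mul1r.
  by rewrite (sum_hat_cell (fun=> 1) kn xk) hatk hatk1; ring.
by rewrite (sum_hat_cell _ kn xk) hatk hatk1 nodeS; field.
Qed.

Lemma Pn_norm_le (v : R -> R) (x eta : R) : x \in I ->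
  (forall j, (j <= n)%N -> `|x - x_ j| < h -> `|v (x_ j)| <= eta) ->
  `|Pn n v x| <= eta.
Proof.
move=> xI vB; apply: le_trans (ler_norm_sum _ _ _) _.
apply: (@le_trans _ _ (\sum_(j < n.+1) eta * hat n j x)); last first.
  by rewrite -mulr_sumr (hat_partition xI).1 mulr1.
apply: ler_sum => j _; rewrite normrM (ger0_norm (hat_ge0 _ _)).
have [xj|xj] := ltP `|x - x_ j| h; last by rewrite hat_eq0 // !mulr0.
by rewrite ler_wpM2r ?hat_ge0 // vB // -ltnS.
Qed.

Lemma PnB (f g : R -> R) (x : R) : Pn n (fun y => f y - g y) x = Pn n f x - Pn n g x.
Proof. by rewrite /Pn -sumrB; apply: eq_bigr => j _; rewrite mulrBl. Qed.

Lemma Pn_divr (f : R -> R) (c x : R) : Pn n (fun y => f y / c) x = Pn n f x / c.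
Proof. by rewrite /Pn mulr_suml; apply: eq_bigr => j _; rewrite mulrAC. Qed.

(* Since [P_n] reproduces affine functions, [g] may be replaced by [g] minus any
   affine function through [(x, g x)]; with slope [g' x] this is the Taylor
   remainder. *)
Lemma interp_errorE (g : R -> R) (c : R) {x : R} : x \in I ->
  g x - Pn n g x = Pn n (fun y => - (g y - g x - c * (y - x))) x.
Proof.
move=> xI; have [sum1 sumx] := hat_partition xI.
rewrite /Pn -{1}(mulr1 (g x)) -sum1 mulr_sumr -sumrB.
have -> : \sum_(j < n.+1) (- (g (x_ j) - g x - c * (x_ j - x))) * hat n j x
  = \sum_(j < n.+1) (g x * hat n j x - g (x_ j) * hat n j x)
    + c * (\sum_(j < n.+1) x_ j * hat n j x - x * \sum_(j < n.+1) hat n j x).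
  by rewrite mulr_sumr -sumrB mulr_sumr -big_split; apply: eq_bigr => j _ /=; ring.
by rewrite sum1 sumx mulr1 subrr mulr0 addr0.
Qed.

Lemma interp_error_unif (g : R -> R) (eta x : R) : x \in I ->
  (forall y, y \in I -> `|x - y| < h -> `|g x - g y| <= eta) ->
  `|g x - Pn n g x| <= eta.
Proof.
move=> xI gB; rewrite (interp_errorE g 0 xI).
apply: Pn_norm_le => // j jn xj; rewrite mul0r subr0 opprB.
by apply: gB => //; apply: node_in_I.
Qed.

Lemma interp_error_C2 (g g1 g2 : R -> R) (B x : R) : x \in I ->
  hasDerivOmega g g1 -> hasDerivOmega g1 g2 -> (forall y, y \in I -> `|g2 y| <= B) ->
  `|g x - Pn n g x| <= B * h ^+ 2.
Proof.
move=> xI dg dg1 g2B; rewrite (interp_errorE g (g1 x) xI).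
apply: Pn_norm_le => // j jn xj; rewrite normrN.
apply: le_trans (taylor2_bound dg dg1 g2B _ _ xI (node_in_I jn)) _.
have B0 : 0 <= B by apply: le_trans (g2B x xI).
rewrite ler_wpM2l // -[(x_ j - x) ^+ 2](real_normK (num_real _)) distrC.
by rewrite !expr2 ler_pM // ltW.
Qed.

End Interpolation.

Section Operator.
Context {R : realType}.
Local Notation mu := (@lebesgue_measure R).

Lemma measurable_Omega : measurable (@Omega R : set (measurableTypeR R)).
Proof. exact: measurable_itv. Qed.

Lemma lipschitz_continuous {f : R -> R} {L : R} :
  (forall s r, `|f s - f r| <= L * `|s - r|) -> continuous f.
Proof.
move=> fL s; apply/cvgrPdist_le => e e0.
have L0 : 0 < `|L| + 1 by have := normr_ge0 L; lra.
apply/nbhs_ballP; exists (e / (`|L| + 1)); first by rewrite /= divr_gt0.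
move=> z; rewrite /ball_ /= => sz; apply: le_trans (fL _ _) _.
apply: (@le_trans _ _ ((`|L| + 1) * `|s - z|)).
  by rewrite ler_wpM2r // (le_trans (ler_norm _)) // lerDl.
by rewrite mulrC -ler_pdivlMr // ltW.
Qed.

Lemma measurable_comp_inX {f v : R -> R} : continuous f -> inX v ->
  measurable_fun (@Omega R) (fun y => f (v y)).
Proof.
move=> cf cv; apply: measurable_realfun.subspace_continuous_measurable_fun.
  exact: measurable_Omega.
apply/subspace_continuousP => y Oy.
apply: (@cvg_comp _ _ _ v f _ (nbhs (v y))); last exact: cf.
exact: ((@subspace_continuousP _ [set x : R | x \in I] _ v).1 cv y Oy).
Qed.

Lemma integrable_Omega {g : R -> R} {M : R} : measurable_fun (@Omega R) g ->
  (\int[mu]_(y in @Omega R) (`|g y|)%:E <= M%:E)%E ->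
  mu.-integrable (@Omega R) (EFin \o g).
Proof.
move=> mg gM; apply/integrableP; split; first exact/measurable_realfun.measurable_EFinP.
rewrite /comp; under eq_integral => y _ do rewrite abse_EFin.
by apply: le_lt_trans gM _; exact: ltry.
Qed.

Lemma integrable_Omega_mulr {g k : R -> R} {M Mk : R} : measurable_fun (@Omega R) g ->
  (\int[mu]_(y in @Omega R) (`|g y|)%:E <= M%:E)%E ->
  measurable_fun (@Omega R) k -> (forall y, `|k y| <= Mk) ->
  mu.-integrable (@Omega R) (EFin \o (fun y => g y * k y)).
Proof.
move=> mg gM mk kM.
have kbnd : [bounded k y | y in @Omega R].
  rewrite /bounded_near; near=> B => t _ /=; apply: le_trans (kM t) _.
  by near: B; apply: nbhs_pinfty_ge; exact: num_real.
have := integrableMl measurable_Omega (integrable_Omega mg gM) mk kbnd.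
by apply: (eq_integrable measurable_Omega) => y _.
Unshelve. all: end_near. Qed.

Lemma Rintegral_Omega_norm_le (g : R -> R) (M : R) :
  (\int[mu]_(y in @Omega R) (`|g y|)%:E <= M%:E)%E ->
  Rintegral mu (@Omega R) (fun y => `|g y|) <= M.
Proof.
move=> gM; rewrite /Rintegral.
have : (0 <= \int[mu]_(y in @Omega R) (`|g y|)%:E)%E.
  by apply: integral_ge0 => y _; rewrite lee_fin.
by move: gM; case: (\int[mu]_(y in @Omega R) (`|g y|)%:E)%E.
Qed.

Lemma Wop_lipschitz {w : R -> R -> R} {f v1 v2 : R -> R} {x Mw Lf Mf D : R} :
  measurable_fun (@Omega R) (w x) ->
  (\int[mu]_(y in @Omega R) (`|w x y|)%:E <= Mw%:E)%E ->
  (forall s, `|f s| <= Mf) -> (forall s r, `|f s - f r| <= Lf * `|s - r|) -> 0 <= Lf ->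
  inX v1 -> inX v2 -> 0 <= D -> (forall y, y \in I -> `|v1 y - v2 y| <= D) ->
  `|Wop w (fun y => f (v1 y)) x - Wop w (fun y => f (v2 y)) x| <= Lf * D * Mw.
Proof.
move=> mw wM fM fL L0 cv1 cv2 D0 v12D.
have cf := lipschitz_continuous fL.
have i1 := integrable_Omega_mulr mw wM (measurable_comp_inX cf cv1) (fun y => fM (v1 y)).
have i2 := integrable_Omega_mulr mw wM (measurable_comp_inX cf cv2) (fun y => fM (v2 y)).
have iw := integrable_norm (integrable_Omega mw wM).
rewrite /Wop -(RintegralB measurable_Omega i1 i2).
have i12 : mu.-integrable (@Omega R)
    (EFin \o (fun y => w x y * f (v1 y) - w x y * f (v2 y))).
  by apply: (eq_integrable measurable_Omega _ _ _ (integrableB measurable_Omega i1 i2)) => y _.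
apply: le_trans (le_normr_Rintegral measurable_Omega i12) _.
have iLw : mu.-integrable (@Omega R) (EFin \o (fun y => Lf * D * `|w x y|)).
  by apply: (eq_integrable measurable_Omega _ _ _ (integrableZl measurable_Omega (Lf * D) iw)) => y _.
apply: le_trans (le_Rintegral measurable_Omega (integrable_norm i12) iLw _) _.
  move=> y Oy /=; rewrite -mulrBr normrM mulrC ler_wpM2r //.
  by apply: le_trans (fL _ _) _; rewrite ler_wpM2l // v12D.
rewrite RintegralZl //; first by rewrite ler_wpM2l ?mulr_ge0 ?Rintegral_Omega_norm_le.
exact: measurable_Omega.
Qed.

Lemma Nop_lipschitz {w : R -> R -> R} {f : R -> R} (xi : R -> R -> R) (t : R)
  {v1 v2 : R -> R} {x Mw Lf Mf D : R} :
  measurable_fun (@Omega R) (w x) ->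
  (\int[mu]_(y in @Omega R) (`|w x y|)%:E <= Mw%:E)%E ->
  (forall s, `|f s| <= Mf) -> (forall s r, `|f s - f r| <= Lf * `|s - r|) -> 0 <= Lf ->
  inX v1 -> inX v2 -> 0 <= D -> (forall y, y \in I -> `|v1 y - v2 y| <= D) -> x \in I ->
  `|Nop w f xi t v1 x - Nop w f xi t v2 x| <= (1 + Lf * Mw) * D.
Proof.
move=> mw wM fM fL L0 cv1 cv2 D0 v12D xI.
have := Wop_lipschitz mw wM fM fL L0 cv1 cv2 D0 v12D; have := v12D x xI.
have -> : Nop w f xi t v1 x - Nop w f xi t v2 x =
   - (v1 x - v2 x) + (Wop w (fun y => f (v1 y)) x - Wop w (fun y => f (v2 y)) x).
  by rewrite /Nop; ring.
have := ler_normD (- (v1 x - v2 x))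
  (Wop w (fun y => f (v1 y)) x - Wop w (fun y => f (v2 y)) x).
by rewrite normrN; lra.
Qed.

End Operator.

Section Gronwall.
Context {R : realType}.

Lemma gronwall_step (r eps K X Y a : R) : 0 <= r -> 0 < eps -> 0 <= K -> 1 <= X ->
  0 <= a -> 1 + 2 * K * a <= Y ->
  (r + eps) * (X - 1 / 2) + K * (r + (r + eps) * (X - 1 / 2) + eps) * a
    <= (r + eps) * (X * Y - 1 / 2).
Proof.
move=> r0 e0 K0 X1 a0 Ya; set p := (r + eps) * (X - 1 / 2).
have : (r + eps) * X * (2 * K * a) <= (r + eps) * X * (Y - 1).
  by rewrite ler_wpM2l ?mulr_ge0 //; lra.
have : 0 <= K * a * (r + eps) * (X - 1 / 2) by rewrite !mulr_ge0 //; lra.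
have -> : (r + eps) * (X * Y - 1 / 2) = p + (r + eps) * X * (Y - 1) by rewrite /p; field.
have -> : p + K * (r + p + eps) * a
  = p + (r + eps) * X * (2 * K * a) - K * a * (r + eps) * (X - 1 / 2) by rewrite /p; field.
lra.
Qed.

Variables (t0 T : R).
Hypothesis T_gt0 : 0 < T.
Local Notation J := (`[t0, t0 + T]).

(* The barrier [(r + eps) (e^{2K(s - t0)} - 1/2)] is positive at [t0] and
   grows faster than [K (r + barrier + eps)], so [|th|] can never reach it. *)
Lemma gronwall_barrier {K r eps : R} {th th' : R -> R -> R} : 1 <= K -> 0 <= r -> 0 < eps ->
  (forall x, x \in I -> th t0 x = 0) -> cont_CJX t0 T th -> hasDerivCJX t0 T th th' ->
  (forall t, t \in J -> forall B, 0 <= B -> (forall y, y \in I -> `|th t y| <= B) ->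
     forall x, x \in I -> `|th' t x| <= K * (r + B)) ->
  forall s, t0 <= s -> s <= t0 + T -> forall x, x \in I ->
    `|th s x| <= (r + eps) * (expR (2 * K * (s - t0)) - 1 / 2).
Proof.
move=> K1 r0 eps0 th_t0 th_cont th_deriv th'_bound.
pose psi s := (r + eps) * (expR (2 * K * (s - t0)) - 1 / 2).
have exp_ge1 : forall s, t0 <= s -> 1 <= expR (2 * K * (s - t0)).
  move=> s ts; have := expR_ge1Dx (2 * K * (s - t0)).
  have : 0 <= 2 * K * (s - t0) by rewrite !mulr_ge0 //; lra.
  lra.
have psi_mono : forall s s', s <= s' -> psi s <= psi s'.
  move=> s s' ss'; rewrite /psi ler_wpM2l ?lerD2r ?ler_expR ?ler_wpM2l //; lra.
have psi_ge0 : forall s, t0 <= s -> 0 <= psi s.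
  by move=> s /exp_ge1 ?; rewrite /psi mulr_ge0 //; lra.
apply: (@itv_real_ind R t0 (t0 + T)); first by have := T_gt0; lra.
- by move=> y yI; rewrite th_t0 // normr0; exact: psi_ge0.
- move=> s ts sT IH y yI.
  apply: (@le_left_limit R t0 s (fun z => th z y) psi) => //; first last.
  - by move=> z; exact: psi_mono.
  - by move=> z tz zs; apply: IH.
  move=> e e0; have [d d0 Hd] := th_cont s (ltac:(by rewrite in_itv /= ?(ltW ts))) e e0.
  exists d => // z tz zs sz; rewrite distrC; apply: Hd => //.
    by rewrite in_itv /= tz; lra.
  by rewrite ltr0_norm; lra.
- move=> s ts sT Ps.
  have sJ : s \in J by rewrite in_itv /= ts (ltW sT).
  have [d d0 Hd] := th_deriv s sJ (K * eps) (ltac:(by rewrite mulr_gt0 //; lra)).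
  exists d => // s' ss' s'd s'T y yI; rewrite -/(psi s').
  have ss'_neq : s != s' by rewrite lt_eqF.
  have quot := Hd s' (ltac:(by rewrite in_itv /= s'T andbT; lra))
    ltac:(rewrite gtr0_norm; lra) y yI.
  have incr := diff_quot_bound ss'_neq quot.
  rewrite [`|s' - s|]gtr0_norm in incr; last lra.
  have th'B := th'_bound s sJ (psi s) (psi_ge0 s ts) Ps y yI.
  have thB : `|th s y| <= psi s := Ps y yI.
  have psi_incr : K * (r + psi s + eps) * (s' - s) <= psi s' - psi s.
    rewrite /psi (_ : 2 * K * (s' - t0) = 2 * K * (s - t0) + 2 * K * (s' - s)); last by ring.
    have := @gronwall_step r eps K (expR (2 * K * (s - t0))) (expR (2 * K * (s' - s)))
      (s' - s) r0 eps0 (ltac:(lra)) (exp_ge1 s ts) (ltac:(lra)) (expR_ge1Dx _).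
    by rewrite expRD /=; lra.
  have : (`|th' s y| + K * eps) * (s' - s) <= K * (r + psi s + eps) * (s' - s).
    by rewrite ler_wpM2r; lra.
  have := ler_normD (th s' y - th s y) (th s y); rewrite subrK.
  lra.
Qed.

Lemma gronwall_CJX (K r : R) (th th' : R -> R -> R) : 1 <= K -> 0 <= r ->
  (forall x, x \in I -> th t0 x = 0) -> cont_CJX t0 T th -> hasDerivCJX t0 T th th' ->
  (forall t, t \in J -> forall B, 0 <= B -> (forall y, y \in I -> `|th t y| <= B) ->
     forall x, x \in I -> `|th' t x| <= K * (r + B)) ->
  forall t x, t \in J -> x \in I -> `|th t x| <= r * expR (2 * K * T).
Proof.
move=> K1 r0 th_t0 th_cont th_deriv th'_bound t x /[dup] tJ; rewrite in_itv /= => /andP[t1 t2] xI.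
set E := expR (2 * K * T); have E0 : 0 < E by apply: expR_gt0.
apply/ler_addgt0Pr => e e0.
have eps0 : 0 < e / E by rewrite divr_gt0.
have := gronwall_barrier K1 r0 eps0 th_t0 th_cont th_deriv th'_bound t t1 t2 x xI.
have : expR (2 * K * (t - t0)) <= E by rewrite /E ler_expR ler_wpM2l //; lra.
have : (r + e / E) * E = r * E + e by rewrite mulrDl divfK // gt_eqF.
move=> eq h; have : (r + e / E) * expR (2 * K * (t - t0)) <= (r + e / E) * E.
  by rewrite ler_wpM2l //; lra.
have := expR_gt0 (2 * K * (t - t0)); nra.
Qed.

End Gronwall.

Section Semidiscrete.
Context {R : realType}.
Local Notation mu := (@lebesgue_measure R).
Variables (t0 T : R).
Hypothesis T_gt0 : 0 < T.
Local Notation J := (`[t0, t0 + T]).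

Lemma cont_CJXB {v1 v2 : R -> R -> R} : cont_CJX t0 T v1 -> cont_CJX t0 T v2 ->
  cont_CJX t0 T (fun t x => v1 t x - v2 t x).
Proof.
move=> cv1 cv2 t tJ e e0.
have [d1 d1_gt0 Hd1] := cv1 t tJ (e / 2) ltac:(lra).
have [d2 d2_gt0 Hd2] := cv2 t tJ (e / 2) ltac:(lra).
exists (Num.min d1 d2); first by rewrite lt_min d1_gt0 d2_gt0.
move=> s sJ; rewrite lt_min => /andP[sd1 sd2] x xI.
have := Hd1 s sJ sd1 x xI; have := Hd2 s sJ sd2 x xI.
have -> : v1 s x - v2 s x - (v1 t x - v2 t x) = (v1 s x - v1 t x) - (v2 s x - v2 t x)
  by ring.
by have := ler_normB (v1 s x - v1 t x) (v2 s x - v2 t x); lra.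
Qed.

Lemma hasDerivCJXB {v1 v2 v1' v2' : R -> R -> R} :
  hasDerivCJX t0 T v1 v1' -> hasDerivCJX t0 T v2 v2' ->
  hasDerivCJX t0 T (fun t x => v1 t x - v2 t x) (fun t x => v1' t x - v2' t x).
Proof.
move=> dv1 dv2 t tJ e e0.
have [d1 d1_gt0 Hd1] := dv1 t tJ (e / 2) ltac:(lra).
have [d2 d2_gt0 Hd2] := dv2 t tJ (e / 2) ltac:(lra).
exists (Num.min d1 d2); first by rewrite lt_min d1_gt0 d2_gt0.
move=> s sJ /andP[st0]; rewrite lt_min => /andP[sd1 sd2] x xI.
have := Hd1 s sJ (ltac:(by rewrite st0)) x xI; have := Hd2 s sJ (ltac:(by rewrite st0)) x xI.
have st : s - t != 0 by rewrite -normr_gt0.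
set q1 := (v1 s x - v1 t x) / (s - t) - v1' t x.
set q2 := (v2 s x - v2 t x) / (s - t) - v2' t x.
have -> : (v1 s x - v2 s x - (v1 t x - v2 t x)) / (s - t) - (v1' t x - v2' t x) = q1 - q2.
  by rewrite /q1 /q2; field.
by have := ler_normB q1 q2; lra.
Qed.

Variable n : nat.
Hypothesis n_gt0 : (0 < n)%N.

Lemma cont_CJX_Pn {v : R -> R -> R} : cont_CJX t0 T v ->
  cont_CJX t0 T (fun t => Pn n (v t)).
Proof.
move=> cv t tJ e e0; have [d d0 Hd] := cv t tJ e e0.
exists d => // s sJ st x xI; rewrite -PnB.
by apply: Pn_norm_le => // j jn _; apply: Hd => //; exact: node_in_I.
Qed.

Lemma hasDerivCJX_Pn {v v' : R -> R -> R} : hasDerivCJX t0 T v v' ->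
  hasDerivCJX t0 T (fun t => Pn n (v t)) (fun t => Pn n (v' t)).
Proof.
move=> dv t tJ e e0; have [d d0 Hd] := dv t tJ e e0.
exists d => // s sJ st x xI; rewrite -PnB -Pn_divr -PnB.
by apply: Pn_norm_le => // j jn _; apply: Hd => //; exact: node_in_I.
Qed.

Variables (w : R -> R -> R) (f : R -> R) (xi : R -> R -> R) (u0 : R -> R).
Variables (u un : R -> R -> R) (Mw Lf Mf : R).
Hypotheses (w_meas : forall x, x \in I -> measurable_fun (@Omega R) (w x))
  (w_int : forall x, x \in I -> (\int[mu]_(y in @Omega R) (`|w x y|)%:E <= Mw%:E)%E)
  (f_bounded : forall s, `|f s| <= Mf) (f_lip : forall s r, `|f s - f r| <= Lf * `|s - r|)
  (Lf_ge0 : 0 <= Lf) (Mw_ge0 : 0 <= Mw)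
  (u_sol : isSolution t0 T (Nop w f xi) u0 u)
  (un_sol : isSolution t0 T (fun t v => Pn n (Nop w f xi t v)) (Pn n u0) un).

Lemma semidiscrete_error_le (r : R) : 0 <= r ->
  (forall t x, t \in J -> x \in I -> `|u t x - Pn n (u t) x| <= r) ->
  forall t x, t \in J -> x \in I ->
    `|u t x - un t x| <= r * (1 + expR (2 * (1 + Lf * Mw) * T)).
Proof.
move: u_sol un_sol => [U' [cu _ du U'E u_t0]] [V' [cun _ dun V'E un_t0]].
move=> r0 interpB.
pose th t x := Pn n (u t) x - un t x.
have K1 : 1 <= 1 + Lf * Mw by have := mulr_ge0 Lf_ge0 Mw_ge0; lra.
have err_split : forall t x, u t x - un t x = (u t x - Pn n (u t) x) + th t x.
  by move=> t x; rewrite /th; ring.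
have thB : forall t x, t \in J -> x \in I -> `|th t x| <= r * expR (2 * (1 + Lf * Mw) * T).
  apply: (@gronwall_CJX R t0 T T_gt0 _ r th (fun t x => Pn n (U' t) x - V' t x) K1 r0).
  - move=> x xI; rewrite /th un_t0 //; apply/eqP; rewrite subr_eq0; apply/eqP.
    by apply: eq_bigr => j _; rewrite u_t0 // node_in_I // -ltnS.
  - exact: cont_CJXB (cont_CJX_Pn cu.2) cun.2.
  - exact: hasDerivCJXB (hasDerivCJX_Pn du) dun.
  move=> t tJ B B0 thtB x xI; rewrite V'E // -PnB.
  apply: Pn_norm_le => // j jn _.
  have xjI : node R n j \in I := node_in_I n n_gt0 jn.
  rewrite U'E //; apply: (Nop_lipschitz xi t (w_meas _ xjI) (w_int _ xjI) f_bounded f_lip Lf_ge0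
    (cu.1 t tJ) (cun.1 t tJ) _ _ xjI); first lra.
  move=> y yI; rewrite err_split; apply: le_trans (ler_normD _ _) _.
  by apply: lerD; [exact: interpB | exact: thtB].
move=> t x tJ xI; rewrite err_split; apply: le_trans (ler_normD _ _) _.
by rewrite mulrDr mulr1; apply: lerD; [exact: interpB | exact: thB].
Qed.

End Semidiscrete.

Section Convergence.
Context {R : realType}.

Lemma hx_small {d : R} : 0 < d -> exists N : nat, forall n, (0 < n)%N -> (N <= n)%N ->
  hx R n < d.
Proof.
move=> d0; exists (Num.Def.archi_bound (2 / d)) => n n0 Nn.
have := @archi_boundP _ (2 / d) (ltac:(by rewrite divr_ge0 // ltW)).
have : (Num.Def.archi_bound (2 / d))%:R <= n%:R :> R by rewrite ler_nat.
move=> Nn' /lt_le_trans /(_ Nn').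
by rewrite ltr_pdivrMr // /hx ltr_pdivrMr ?ltr0n // mulrC.
Qed.

Context {t0 T C : R} {u : R -> R -> R} {un : nat -> R -> R -> R}.
Hypotheses (T_gt0 : 0 < T) (C_gt0 : 0 < C).
Local Notation J := (`[t0, t0 + T]).
Hypothesis error_le_interp : forall n r, (0 < n)%N -> 0 <= r ->
  (forall t x, t \in J -> x \in I -> `|u t x - Pn n (u t) x| <= r) ->
  forall t x, t \in J -> x \in I -> `|u t x - un n t x| <= r * C.

Lemma semidiscrete_cvg : inCJX t0 T u -> forall eps, 0 < eps ->
  exists N : nat, forall n, (0 < n)%N -> (N <= n)%N ->
    forall t, t \in J -> forall x, x \in I -> `|u t x - un n t x| <= eps.
Proof.
move=> cu e e0.
have eta0 : 0 < e / C by rewrite divr_gt0.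
have [d d0 ud] := inCJX_unif_cont T_gt0 cu (e / C) eta0.
have [N hxd] := hx_small d0.
exists N => n n0 Nn t tJ x xI; rewrite -(divfK (lt0r_neq0 C_gt0) e).
apply: error_le_interp => // [|s y sJ yI]; first exact: ltW.
apply: interp_error_unif => // z zI yz.
exact: ud _ _ _ sJ yI zI (lt_trans yz (hxd n n0 Nn)).
Qed.

Lemma semidiscrete_rate : inCJC2 t0 T u ->
  exists2 kappa, 0 < kappa & forall n, (0 < n)%N ->
    forall t, t \in J -> forall x, x \in I -> `|u t x - un n t x| <= kappa * hx R n ^+ 2.
Proof.
move=> [u1 [u2 [_ _ cu2 du du1]]].
have [B u2B] := inCJX_bounded T_gt0 cu2.
pose B' := Num.max B 0.
have B'0 : 0 <= B' by rewrite le_max lexx orbT.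
have u2B' : forall t x, t \in J -> x \in I -> `|u2 t x| <= B'.
  by move=> t x tJ xI; apply: le_trans (u2B t x tJ xI) _; rewrite le_max lexx.
exists ((B' + 1) * C); first by rewrite mulr_gt0 //; lra.
move=> n n0 t tJ x xI.
have h2_ge0 : 0 <= hx R n ^+ 2 by rewrite exprn_ge0 // ltW // hx_gt0.
have interpB : forall s y, s \in J -> y \in I ->
    `|u s y - Pn n (u s) y| <= B' * hx R n ^+ 2.
  move=> s y sJ yI.
  exact: interp_error_C2 yI (du s sJ) (du1 s sJ) (fun z zI => u2B' s z sJ zI).
apply: le_trans (error_le_interp _ _ n0 (mulr_ge0 B'0 h2_ge0) interpB _ _ tJ xI) _.
by rewrite mulrAC !ler_wpM2r ?(ltW C_gt0) //; lra.
Qed.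

End Convergence.

Theorem corollary5p1 (R : realType) (t0 T : R) (w : R -> R -> R)
  (f : R -> R) (xi : R -> R -> R) (u0 : R -> R)
  (u : R -> R -> R) (un : nat -> R -> R -> R) :
  0 < T ->
  (forall x : R, x \in `[(-1)%R, 1%R] -> measurable_fun (@Omega R) (w x)) ->
  (forall eps : R, 0 < eps -> exists2 h : R, 0 < h &
     forall x z : R, x \in `[(-1)%R, 1%R] -> z \in `[(-1)%R, 1%R] -> `|x - z| <= h ->
       (\int[lebesgue_measure]_(y in @Omega R) (`|w x y - w z y|)%:E <= eps%:E)%E) ->
  (exists M : R, forall x : R, x \in `[(-1)%R, 1%R] ->
       (\int[lebesgue_measure]_(y in @Omega R) (`|w x y|)%:E <= M%:E)%E) ->
  (exists M : R, forall s : R, `|f s| <= M) ->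
  (forall s : R, derivable f s 1) ->
  (exists L : R, forall s r : R, `|f s - f r| <= L * `|s - r|) ->
  (exists M : R, forall s : R, `|derive1 f s| <= M) ->
  inCJX t0 T xi ->
  inX u0 ->
  isSolution t0 T (Nop w f xi) u0 u ->
  (forall n : nat, (0 < n)%N ->
     isSolution t0 T (fun t v => Pn n (Nop w f xi t v)) (Pn n u0) (un n)) ->
  (forall eps : R, 0 < eps -> exists N : nat, forall n : nat, (0 < n)%N -> (N <= n)%N ->
     forall t : R, t \in `[t0, t0 + T] -> forall x : R, x \in `[(-1)%R, 1%R] ->
       `|u t x - un n t x| <= eps)
  /\
  (inCJC2 t0 T u ->
   exists2 kappa : R, 0 < kappa &
     forall n : nat, (0 < n)%N ->
       forall t : R, t \in `[t0, t0 + T] -> forall x : R, x \in `[(-1)%R, 1%R] ->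
         `|u t x - un n t x| <= kappa * @hx R n ^+ 2).
Proof.
move=> T_gt0 w_meas _ [M w_int] [Mf f_bounded] _ [L f_lip] _ _ _ u_sol un_sol.
have [Lf Lf_ge0 f_lip'] : exists2 Lf, 0 <= Lf & forall s r, `|f s - f r| <= Lf * `|s - r|.
  exists (Num.max L 0) => [|s r]; first by rewrite le_max lexx orbT.
  by apply: le_trans (f_lip s r) _; rewrite ler_wpM2r // le_max lexx.
have [Mw Mw_ge0 w_int'] : exists2 Mw, 0 <= Mw & forall x, x \in `[(-1)%R, 1%R] ->
    (\int[lebesgue_measure]_(y in @Omega R) (`|w x y|)%:E <= Mw%:E)%E.
  exists (Num.max M 0) => [|x xI]; first by rewrite le_max lexx orbT.
  by apply: le_trans (w_int x xI) _; rewrite lee_fin le_max lexx.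
have C_gt0 : 0 < 1 + expR (2 * (1 + Lf * Mw) * T).
  by have := expR_gt0 (2 * (1 + Lf * Mw) * T); lra.
have error_le_interp n r n_gt0 :=
  @semidiscrete_error_le R t0 T T_gt0 n n_gt0 w f xi u0 u (un n) Mw Lf Mf
    w_meas w_int' f_bounded f_lip' Lf_ge0 Mw_ge0 u_sol (un_sol n n_gt0) r.
have [_ [cu _ _ _ _]] := u_sol.
split; [exact: (semidiscrete_cvg T_gt0 C_gt0 error_le_interp cu) | exact: (semidiscrete_rate T_gt0 C_gt0 error_le_interp)].
Qed.
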